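(* Let $G$ be a finite connected chordal graph. Then its center $C(G)$ is a diameter certificate of $G$, i.e. for every vertex $u$, $\min_{c\in C(G)}(d(u,c)+e(c))\le\operatorname{diam}(G)$.
   Context: A graph is chordal if every induced cycle of length at least 4 has a chord. $d$ shortest-path distance, $e(v)=\max_u d(v,u)$, $\operatorname{rad}(G)=\min_v e(v)$, $\operatorname{diam}(G)=\max_v e(v)$, $C(G)=\{c: e(c)=\operatorname{rad}(G)\}$. *)

From mathcomp Require Import all_boot.
Set Implicit Arguments. Unset Strict Implicit. Unset Printing Implicit Defensive.

Section Graph.
Variables (T : finType) (e : rel T).

Definition walkb (n : nat) (u v : T) : bool :=
  [exists p : n.-tuple T, path e u p && (last u p == v)].

(* In a connected graph such an n < #|T| exists; the search range iota 0 #|T|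
   is therefore exhaustive (value #|T| only for unreachable pairs). *)
Definition dist (u v : T) : nat := find (fun n => walkb n u v) (iota 0 #|T|).

Definition ecc (v : T) : nat := \max_(u : T) dist v u.
Definition diam : nat := \max_(v : T) ecc v.
Definition rad : nat := \big[minn/diam]_(v : T) ecc v.
Definition center : {set T} := [set c | ecc c == rad].

Definition simple_graph : Prop := symmetric e /\ irreflexive e.
Definition connected_graph : Prop := forall u v : T, connect e u v.

(* chordal: every cycle x :: s (vertices distinct) of length >= 4 has a chord,
   i.e. an edge between two vertices that are not consecutive on the cycle *)
Definition chordal : Prop :=
  forall (x : T) (s : seq T),
    uniq (x :: s) -> 4 <= size (x :: s) -> cycle e (x :: s) ->
    exists i j : nat,
      [/\ i < j, j < size (x :: s), i.+1 < j,
          ~~ ((i == 0) && (j == (size (x :: s)).-1)) &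
          e (nth x (x :: s) i) (nth x (x :: s) j)].
End Graph.

(* Let c0 be a central vertex nearest to u, j = d(u, c0), and suppose
   j + rad > diam.  Let S be the component of c0 among the vertices at distance
   at least j from u, and K the set of vertices at distance j - 1 adjacent to S.
   Chordality makes K a clique: two non-adjacent vertices of K would be joined by
   a chordless cycle through S and through the ball of radius j - 1 around u.
   Every path leaving S meets K, and the vertices of K are closer to u than c0,
   hence not central.  It follows that every y in S is within rad of some vertex
   of K; choosing y1 in S with the fewest such vertices produces a1, a2 in K and
   y1, y2 with d(a1,y1) <= rad < d(a2,y1) and d(a2,y2) <= rad < d(a1,y2).
   Applying the separation argument once more, around y2, gives
   d(y1,y2) >= 2 rad, whereas diam < j + rad <= 2 rad. *)

From mathcomp Require Import all_boot zify.
Set Implicit Arguments. Unset Strict Implicit. Unset Printing Implicit Defensive.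

Section Distance.
Variables (T : finType) (e : rel T).

Lemma walkP n u v :
  reflect (exists p, [/\ size p = n, path e u p & last u p = v]) (walkb e n u v).
Proof.
apply: (iffP existsP) => [[t /andP [Hp /eqP Hl]]|[p [Hs Hp Hl]]].
  by exists (tval t); rewrite size_tuple.
have Hs' : size p == n by rewrite Hs.
by exists (Tuple Hs'); rewrite /= Hp Hl eqxx.
Qed.

Lemma dist_le_walk n u v : walkb e n u v -> dist e u v <= n.
Proof.
move=> Hw; rewrite /dist; case: (ltnP n #|T|) => Hn.
  rewrite leqNgt; apply/negP => /(before_find 0).
  by rewrite nth_iota // add0n Hw.
by apply: leq_trans (find_size _ _) _; rewrite size_iota.
Qed.

Lemma distxx u : dist e u u = 0.
Proof. by apply/eqP; rewrite -leqn0; apply: dist_le_walk; apply/walkP; exists [::]. Qed.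

Lemma dist_edge_le1 u v : e u v -> dist e u v <= 1.
Proof. by move=> Huv; apply: dist_le_walk; apply/walkP; exists [:: v]; rewrite /= Huv. Qed.

Hypothesis conn : connected_graph e.

Lemma walk_lt_card u v : exists2 n, n < #|T| & walkb e n u v.
Proof.
have /connectP [p Hp ->] := conn u v.
case: (shortenP Hp) => p' Hp' Hu _.
exists (size p'); last by apply/walkP; exists p'.
by have := max_card (mem (u :: p')); rewrite (card_uniqP Hu).
Qed.

Lemma dist_walk u v : walkb e (dist e u v) u v.
Proof.
have [n Hn Hw] := walk_lt_card u v.
have Hh : has (fun n => walkb e n u v) (iota 0 #|T|).
  by apply/hasP; exists n; rewrite ?mem_iota.
have := nth_find 0 Hh; rewrite has_find size_iota in Hh.
by rewrite nth_iota // add0n.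
Qed.

Lemma dist_path u v :
  exists p, [/\ size p = dist e u v, path e u p & last u p = v].
Proof. exact/walkP/dist_walk. Qed.

Lemma dist_eq0 u v : (dist e u v == 0) = (u == v).
Proof.
apply/idP/idP => [/eqP H|/eqP->]; last by rewrite distxx.
have [p [Hs _ Hl]] := dist_path u v.
by move: Hs Hl; rewrite H; case: p => // _ /= ->.
Qed.

Lemma dist_triangle u v w : dist e u w <= dist e u v + dist e v w.
Proof.
have [p [Hs Hp Hl]] := dist_path u v.
have [q [Hs' Hq Hl']] := dist_path v w.
apply: dist_le_walk; apply/walkP; exists (p ++ q).
by rewrite size_cat Hs Hs' cat_path Hp Hl Hq last_cat Hl Hl'.
Qed.

Lemma dist_edge_leS z x y : e x y -> dist e z y <= (dist e z x).+1.
Proof.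
move=> Hxy; apply: leq_trans (dist_triangle z x y) _.
by rewrite -addn1 leq_add2l dist_edge_le1.
Qed.

Lemma dist_step u v n : dist e u v = n.+1 -> exists2 w, e u w & dist e w v = n.
Proof.
move=> H; have [p [Hs Hp Hl]] := dist_path u v.
move: Hs Hp Hl; rewrite H; case: p => // w p [Hs] /= /andP [Huw Hp] Hl.
exists w => //; apply/eqP; rewrite eqn_leq; apply/andP; split.
  by rewrite -Hs; apply: dist_le_walk; apply/walkP; exists p.
rewrite -ltnS -H; apply: leq_trans (dist_triangle u w v) _.
by rewrite -add1n leq_add2r dist_edge_le1.
Qed.

Hypothesis sym : symmetric e.

Lemma distC u v : dist e u v = dist e v u.
Proof.
suff le_dist x y : dist e y x <= dist e x y by apply/eqP; rewrite eqn_leq !le_dist.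
have [p [Hs Hp Hl]] := dist_path x y.
apply: dist_le_walk; apply/walkP; exists (rev (belast x p)).
rewrite size_rev size_belast Hs -Hl rev_path (eq_path (e' := e)) //.
split=> //; case: p {Hs Hp Hl} => //= a p.
by rewrite rev_cons last_rcons.
Qed.

Lemma connect_ball z k x y : dist e z x < k -> dist e z y < k ->
  connect [rel u v | e u v && (dist e z u < k) && (dist e z v < k)] x y.
Proof.
set R := [rel u v | _]; have R_sym : connect_sym R.
  by apply: sym_connect_sym => u v /=; rewrite sym andbAC -andbA andbC.
suff to_center v : dist e z v < k -> connect R v z.
  by move=> /to_center Hx /to_center Hy; apply: connect_trans Hx _; rewrite R_sym.
move Hn : (dist e z v) => n; elim: n v Hn => [|n IH] v Hn Hv.
  by move/eqP: Hn; rewrite dist_eq0 => /eqP ->.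
have [w Hvw Hw] : exists2 w, e v w & dist e w z = n by apply: dist_step; rewrite distC.
have Hzw : dist e z w = n by rewrite distC.
apply: connect_trans (connect1 _) (IH w Hzw _); rewrite /= ?Hvw ?Hn ?Hzw //; lia.
Qed.

End Distance.

Section Eccentricity.
Variables (T : finType) (e : rel T).

Lemma dist_le_ecc v u : dist e v u <= ecc e v.
Proof. exact: (leq_bigmax (F := dist e v)). Qed.

Lemma ecc_le_diam v : ecc e v <= diam e.
Proof. exact: (leq_bigmax (F := ecc e)). Qed.

Lemma ecc_attained v : exists u, dist e v u = ecc e v.
Proof.
have [|u Hu] := eq_bigmax (dist e v); last by exists u; rewrite /ecc Hu.
by apply/card_gt0P; exists v.
Qed.

Lemma rad_le_ecc v : rad e <= ecc e v.
Proof.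
rewrite /rad; have : v \in index_enum T by rewrite mem_index_enum.
elim: (index_enum T) => [|x s IH] //; rewrite inE big_cons => /orP [/eqP <-|Hv].
  exact: geq_minl.
exact: leq_trans (geq_minr _ _) (IH Hv).
Qed.

Lemma rad_attained (v : T) : exists c, ecc e c = rad e.
Proof.
rewrite /rad; apply: (big_ind (fun x => exists c, ecc e c = x)) => [|x y [cx <-] [cy <-]|c _].
- have [|u Hu] := eq_bigmax (ecc e); last by exists u; rewrite /diam Hu.
  by apply/card_gt0P; exists v.
- by case: (leqP (ecc e cx) (ecc e cy)) => H; [exists cx | exists cy]; lia.
- by exists c.
Qed.

End Eccentricity.

Lemma last_take_nth (T : Type) (s : seq T) x i :
  i <= size s -> last x (take i s) = nth x (x :: s) i.
Proof.
elim: s x i => [|y s IH] x [|i] //= Hi.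
by rewrite IH //; apply: set_nth_default.
Qed.

Lemma take_rcons_le (T : Type) (s : seq T) b i :
  i <= size s -> take i (rcons s b) = take i s.
Proof.
move=> Hi; rewrite -cats1 take_cat; case: ltnP => // Hs.
have -> : i = size s by lia.
by rewrite subnn take0 cats0 take_size.
Qed.

Section ChordlessPaths.
Variables (T : finType) (e : rel T).

Definition path_in (Q : pred T) a p b := path e a (rcons p b) && all Q p.

Lemma connect_path_in (R : rel T) (Q : pred T) a x y b :
  subrel R e -> (forall u v, R u v -> Q u -> Q v) -> Q x -> e a x -> e y b ->
  connect R x y -> exists p, path_in Q a p b.
Proof.
move=> sRe RQ Qx ax yb /connectP [q Hq Hy]; exists (x :: q).
rewrite /path_in /= ax rcons_path (sub_path sRe Hq) -Hy yb /=.
elim: q x Qx Hq {ax Hy} => [|v q IH] x Qx /=; first by rewrite Qx.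
by case/andP=> xv Hq; rewrite Qx (IH v (RQ _ _ xv Qx) Hq).
Qed.

Definition chordless (w : seq T) :=
  forall x0 i j, i.+1 < j -> j < size w -> ~~ e (nth x0 w i) (nth x0 w j).

Lemma path_in_shortcut Q a p b i j :
  path_in Q a p b -> i.+1 < j -> j < (size p).+2 ->
  e (nth a (a :: rcons p b) i) (nth a (a :: rcons p b) j) ->
  exists2 p', path_in Q a p' b & size p' < size p.
Proof.
move=> /andP [Hp HQ] Hij Hj He.
set q := rcons p b in Hp He.
have Hsq : size q = (size p).+1 by rewrite size_rcons.
exists (take i p ++ drop j.-1 p); last first.
  by rewrite size_cat size_take size_drop; case: ifP; lia.
apply/andP; split; last first.
  rewrite all_cat; apply/andP; split; apply/allP => x Hx; apply: (allP HQ).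
    exact: mem_take Hx.
  exact: mem_drop Hx.
have -> : rcons (take i p ++ drop j.-1 p) b = take i q ++ drop j.-1 q.
  by rewrite rcons_cat /q drop_rcons ?take_rcons_le //; lia.
rewrite cat_path take_path //= last_take_nth; last lia.
rewrite (drop_nth a); last lia.
have Ej : nth a q j.-1 = nth a (a :: q) j by case: j Hij {Hj He}.
rewrite /= Ej He /=.
have Hp2 : path e (last a (take j q)) (drop j q).
  by move: Hp; rewrite -{1}(cat_take_drop j q) cat_path => /andP [].
rewrite (_ : j.-1.+1 = j); last lia.
by rewrite last_take_nth in Hp2; last lia.
Qed.

Lemma path_in_chordless Q a p b : path_in Q a p b ->
  exists2 p', path_in Q a p' b & chordless (a :: rcons p' b).
Proof.
have [n] := ubnP (size p); elim: n p => // n IH p /ltnSE Hn Hp.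
set w := a :: rcons p b.
have Hsw : size w = (size p).+2 by rewrite /= size_rcons.
case: (boolP [exists i : 'I_(size w), exists j : 'I_(size w),
         (i.+1 < j) && e (nth a w i) (nth a w j)]).
  case/existsP => i /existsP [j /andP [Hij He]].
  have [p' Hp' Hs] := path_in_shortcut Hp Hij (leq_trans (ltn_ord j) (eq_leq Hsw)) He.
  by apply: IH Hp'; apply: leq_trans Hs Hn.
move=> /negP Hno; exists p => // x0 i j Hij Hj; apply/negP => He.
apply: Hno; apply/existsP; exists (Ordinal (ltn_trans (ltnW Hij) Hj)).
apply/existsP; exists (Ordinal Hj) => /=; rewrite Hij /=.
have Hi : i < size w := ltn_trans (ltnW Hij) Hj.
by rewrite (set_nth_default x0 a Hj) (set_nth_default x0 a Hi).
Qed.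

Lemma chordless_uniq Q a p b :
  path_in Q a p b -> chordless (a :: rcons p b) -> uniq p.
Proof.
move=> /andP [Hp _] Hc; apply: contraT => /(uniqPn a) [i [k [Hik Hk Heq]]].
move/(pathP a): Hp => /(_ k.+1); rewrite size_rcons ltnS => /(_ Hk).
have := Hc a i.+1 k.+2; rewrite /= !size_rcons !ltnS => /(_ Hik Hk).
by rewrite /= !nth_rcons (ltn_trans Hik Hk) Hk Heq => /negbTE ->.
Qed.

End ChordlessPaths.

Section GluedCycle.
Variable T : Type.

Lemma nth_glue_l (x0 b1 b2 : T) q1 q2 k : k <= (size q1).+1 ->
  nth x0 (b1 :: q1 ++ b2 :: q2) k = nth x0 (b1 :: rcons q1 b2) k.
Proof. by move=> Hk; rewrite -cat_rcons -cat_cons nth_cat /= size_rcons ltnS Hk. Qed.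

Lemma nth_glue_r (x0 b1 b2 : T) q1 q2 k :
  (size q1).+1 <= k -> k < size q1 + size q2 + 2 ->
  nth x0 (b1 :: q1 ++ b2 :: q2) k = nth x0 (b2 :: rcons q2 b1) (k - (size q1).+1).
Proof.
move=> Hk1 Hk2; rewrite -cat_cons nth_cat /= ltnNge Hk1 /=.
by rewrite -rcons_cons nth_rcons /= ifT //; lia.
Qed.

Lemma nth_glue_last (x0 b1 b2 : T) q : nth x0 (b2 :: rcons q b1) (size q).+1 = b1.
Proof. by rewrite /= nth_rcons ltnn eqxx. Qed.

End GluedCycle.

Lemma mem_nth_inner (T : eqType) (x0 a b : T) q k :
  0 < k -> k <= size q -> nth x0 (a :: rcons q b) k \in q.
Proof. by case: k => [|k] //= _ Hk; rewrite nth_rcons Hk mem_nth. Qed.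

Section ChordalSeparation.
Variables (T : finType) (e : rel T).
Hypothesis sym : symmetric e.
Hypothesis ch : chordal e.
Variables (Q1 Q2 : pred T).
Hypothesis Q1Q2_nonadj : forall x y, Q1 x -> Q2 y -> ~~ e x y.
Hypothesis Q1Q2_disjoint : forall x, Q1 x -> ~~ Q2 x.

(* A chord of the glued cycle lies on one of the two chordless paths or joins
   [Q1] to [Q2]. *)
Lemma glued_cycle_chordless b1 b2 q1 q2 i j :
  all Q1 q1 -> all Q2 q2 ->
  chordless e (b1 :: rcons q1 b2) -> chordless e (b2 :: rcons q2 b1) ->
  let c := b1 :: q1 ++ b2 :: q2 in
  i.+1 < j -> j < size c -> ~~ ((i == 0) && (j == (size c).-1)) ->
  ~~ e (nth b1 c i) (nth b1 c j).
Proof.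
move=> HQ1 HQ2 Hc1 Hc2 c Hij; rewrite /c /= size_cat /= => Hj Hnot.
have Hj' : j < size q1 + size q2 + 2 by lia.
case: (leqP j (size q1).+1) => Hj1.
  have Hi : i <= (size q1).+1 by lia.
  rewrite (nth_glue_l _ _ _ _ Hi) (nth_glue_l _ _ _ _ Hj1).
  by apply: Hc1; rewrite /= ?size_rcons; lia.
rewrite (nth_glue_r _ _ _ (ltnW Hj1) Hj').
case: (leqP (size q1).+1 i) => Hi1.
  have Hi' : i < size q1 + size q2 + 2 by lia.
  by rewrite (nth_glue_r _ _ _ Hi1 Hi'); apply: Hc2; rewrite /= ?size_rcons; lia.
case: i Hij Hnot Hi1 => [|i] Hij; [rewrite eqxx /= => /eqP Hnot Hi1 | move=> _ Hi1].
  rewrite sym -[X in e _ X](nth_glue_last b1 b1 b2 q2).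
  by apply: (Hc2 b1 _ (size q2).+1); rewrite /= ?size_rcons; lia.
have Hi : i.+1 <= size q1 by lia.
have [Hk0 Hk] : 0 < j - (size q1).+1 /\ j - (size q1).+1 <= size q2 by lia.
rewrite nth_glue_l //; last exact: leqW.
by apply: Q1Q2_nonadj; [apply: (allP HQ1) | apply: (allP HQ2)]; apply: mem_nth_inner.
Qed.

Lemma chordal_separated_paths b1 b2 p1 p2 :
  ~~ Q1 b1 -> ~~ Q2 b1 -> ~~ Q1 b2 -> ~~ Q2 b2 -> b1 != b2 ->
  path_in e Q1 b1 p1 b2 -> path_in e Q2 b2 p2 b1 -> e b1 b2.
Proof.
move=> Q1b1 Q2b1 Q1b2 Q2b2 b1b2 Hp1 Hp2; apply: contraT => Hb.
have [q1 Hq1 Hc1] := path_in_chordless Hp1.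
have [q2 Hq2 Hc2] := path_in_chordless Hp2.
have Hu1 := chordless_uniq Hq1 Hc1; have Hu2 := chordless_uniq Hq2 Hc2.
case/andP: Hq1 => Hpath1 HQ1; case/andP: Hq2 => Hpath2 HQ2.
have Hn1 : 0 < size q1.
  by move: Hpath1; case: q1 {Hc1 Hu1 HQ1} => //=; rewrite andbT (negbTE Hb).
have Hn2 : 0 < size q2.
  by move: Hpath2; case: q2 {Hc2 Hu2 HQ2} => //=; rewrite andbT sym (negbTE Hb).
have notin (Q : pred T) s x : all Q s -> ~~ Q x -> x \notin s.
  by move=> /allP HQ; apply: contra (HQ x).
case: (ch (x := b1) (s := q1 ++ b2 :: q2)) => [|||i [j [_ Hj Hij Hnot]]].
- rewrite /= mem_cat inE !negb_or (notin _ _ _ HQ1 Q1b1) b1b2 (notin _ _ _ HQ2 Q2b1).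
  rewrite cat_uniq Hu1 /= negb_or (notin _ _ _ HQ1 Q1b2) (notin _ _ _ HQ2 Q2b2) Hu2 !andbT.
  apply/hasPn => x /(allP HQ2) Hx; apply: notin HQ1 _.
  by apply: contraL Hx; apply: Q1Q2_disjoint.
- by rewrite /= size_cat /=; lia.
- by rewrite /= rcons_cat /= -cat_rcons cat_path Hpath1 last_rcons Hpath2.
by have := glued_cycle_chordless HQ1 HQ2 Hc1 Hc2 Hij Hj Hnot => /negbTE ->.
Qed.

End ChordalSeparation.

Section Frontier.
Variables (T : finType) (e : rel T).
Hypothesis sym : symmetric e.
Hypothesis conn : connected_graph e.
Variables (z : T) (m : nat) (s : T).

Local Notation lev x := (dist e z x).

Definition upper_edge := [rel x y | e x y && (m < lev x) && (m < lev y)].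

Definition upper_comp x := (m < lev x) && connect upper_edge s x.

Definition frontier b := (lev b == m) && [exists x, upper_comp x && e b x].

Lemma upper_comp_edge x y : upper_comp x -> e x y -> m < lev y -> upper_comp y.
Proof.
move=> /andP [Hx Hsx] Hxy Hy; rewrite /upper_comp Hy.
by apply: connect_trans Hsx (connect1 _); rewrite /= Hxy Hx Hy.
Qed.

Lemma frontier_separates x y : upper_comp x -> ~~ upper_comp y ->
  exists2 b, frontier b & dist e b y < dist e x y.
Proof.
move Hn : (dist e x y) => n; elim: n x Hn => [|n IH] x Hn Sx Sy.
  by move/eqP: Hn; rewrite dist_eq0 // => /eqP Exy; rewrite -Exy Sx in Sy.
have [w Hxw Hw] := dist_step conn Hn.
case: (boolP (upper_comp w)) => Sw.
  by have [b Kb Hb] := IH w Hw Sw Sy; exists b; last lia.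
exists w; last by rewrite Hw.
have lev_w : lev w = m.
  have Hwx : e w x by rewrite sym.
  have := dist_edge_leS conn z Hwx; case/andP: (Sx) => Hx _.
  case: (ltnP m (lev w)) => [/(upper_comp_edge Sx Hxw)|]; last lia.
  by rewrite (negbTE Sw).
by rewrite /frontier lev_w eqxx; apply/existsP; exists x; rewrite Sx sym.
Qed.

Lemma frontier_below y : upper_comp y -> exists2 b, frontier b & dist e b y + m <= lev y.
Proof.
move Hn : (lev y) => n; elim: n y Hn => [|n IH] y Hn Sy.
  by case/andP: Sy; rewrite Hn.
have [w Hyw Hw] : exists2 w, e y w & dist e w z = n.
  by apply: (dist_step conn); rewrite (distC conn sym).
have lev_w : lev w = n by rewrite (distC conn sym).
have dist_wy : dist e w y <= 1 by rewrite dist_edge_le1 // sym.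
case: (ltnP m n) => Hmn.
  have Sw : upper_comp w by apply: upper_comp_edge Sy Hyw _; rewrite lev_w.
  have [b Kb Hb] := IH w lev_w Sw; exists b => //.
  by have := dist_triangle conn b w y; lia.
have m_eq : n = m by case/andP: Sy; rewrite Hn; lia.
exists w; last lia.
by rewrite /frontier lev_w m_eq eqxx; apply/existsP; exists y; rewrite Sy sym.
Qed.

Hypothesis ch : chordal e.

Lemma frontier_clique b1 b2 : frontier b1 -> frontier b2 -> b1 != b2 -> e b1 b2.
Proof.
move=> /andP [/eqP Hl1 /existsP [x1 /andP [Sx1 Hx1]]].
move=> /andP [/eqP Hl2 /existsP [x2 /andP [Sx2 Hx2]]] b12.
have [p1 Hp1] : exists p, path_in e upper_comp b1 p b2.
  have up_sym : connect_sym upper_edge.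
    by apply: sym_connect_sym => u v /=; rewrite sym andbAC -andbA andbC.
  apply: (connect_path_in (R := upper_edge) (y := x2) _ _ Sx1 Hx1).
  - by move=> u v /andP [/andP []].
  - by move=> u v /andP [/andP [Huv _] Hv] Su; apply: upper_comp_edge Su Huv Hv.
  - by rewrite sym.
  - by case/andP: Sx1 => _ C1; case/andP: Sx2 => _ C2; rewrite (connect_trans _ C2) // up_sym.
have m_gt0 : 0 < m.
  rewrite lt0n; apply: contraNneq b12 => m0; move: Hl1 Hl2; rewrite m0.
  by move=> /eqP; rewrite dist_eq0 // => /eqP <- /eqP; rewrite dist_eq0 // => /eqP.
have below b : lev b = m -> exists2 d, e b d & lev d < m.
  move=> Hb; have [d Hbd Hd] : exists2 d, e b d & dist e d z = m.-1.
    by apply: (dist_step conn); rewrite (distC conn sym) Hb prednK.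
  by exists d => //; rewrite (distC conn sym) Hd prednK.
have [d1 Hd1 lev_d1] := below b1 Hl1; have [d2 Hd2 lev_d2] := below b2 Hl2.
have [p2 Hp2] : exists p, path_in e (fun x => lev x < m) b2 p b1.
  apply: (connect_path_in (y := d1) _ _ lev_d2 Hd2 _ (connect_ball conn sym lev_d2 lev_d1)).
  - by move=> u v /andP [/andP []].
  - by move=> u v /andP [_ Hv].
  - by rewrite sym.
apply: (chordal_separated_paths sym ch _ _ _ _ _ _ b12 Hp1 Hp2).
- move=> x y /andP [Hx _] Hy; apply/negP; rewrite sym => Hyx.
  by have := dist_edge_leS conn z Hyx; lia.
- by move=> x /andP [Hx _] /=; rewrite -leqNgt ltnW.
all: by rewrite /upper_comp ?Hl1 ?Hl2 ltnn.
Qed.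

Lemma frontier_dist_le a b y : frontier a -> frontier b -> dist e a y <= (dist e b y).+1.
Proof.
move=> Ka Kb; case: (eqVneq a b) => [->|ab]; first exact: leqnSn.
apply: leq_trans (dist_triangle conn a b y) _.
by rewrite -add1n leq_add2r dist_edge_le1 // frontier_clique.
Qed.

End Frontier.

(* Seen from [y2], the vertex [a1] lies in an upper component whose frontier
   contains [a2]. *)
Lemma chordal_almost_geodesic (T : finType) (e : rel T) a1 a2 y1 y2 :
  symmetric e -> connected_graph e -> chordal e ->
  e a1 a2 -> dist e y2 a1 = (dist e y2 a2).+1 -> dist e a1 y1 < dist e a2 y1 ->
  dist e a2 y1 + dist e y2 a2 <= (dist e y2 y1).+1.
Proof.
move=> sym conn ch Ha12 Hq Hlt; set q := dist e y2 a2 in Hq *.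
have S_a1 : upper_comp e y2 q a1 a1 by rewrite /upper_comp Hq ltnSn connect0.
have K_a2 : frontier e y2 q a1 a2.
  by rewrite /frontier eqxx; apply/existsP; exists a1; rewrite S_a1 sym.
case: (boolP (upper_comp e y2 q a1 y1)) => S_y1.
  have [b Kb Hb] := frontier_below sym conn S_y1.
  by have := frontier_dist_le sym conn ch y1 K_a2 Kb; lia.
have [b Kb Hb] := frontier_separates sym conn S_a1 S_y1.
by have := frontier_dist_le sym conn ch y1 K_a2 Kb; lia.
Qed.

Section NearestCenter.
Variables (T : finType) (e : rel T).
Hypothesis sym : symmetric e.
Hypothesis conn : connected_graph e.
Hypothesis ch : chordal e.
Variables (u c0 : T).
Hypothesis c0_center : c0 \in center e.
Hypothesis c0_nearest : forall c, c \in center e -> dist e u c0 <= dist e u c.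
Hypothesis too_far : diam e < dist e u c0 + ecc e c0.

Local Notation r := (rad e).
Local Notation j := (dist e u c0).
Local Notation S := (upper_comp e u j.-1 c0).
Local Notation K := (frontier e u j.-1 c0).

Let ecc_c0 : ecc e c0 = r.
Proof. by apply/eqP; move: c0_center; rewrite inE. Qed.

Let j_gt0 : 0 < j.
Proof. by have := rad_le_ecc e u; have := ecc_le_diam e u; lia. Qed.

Let j_le_r : j <= r.
Proof. by rewrite -ecc_c0 (distC conn sym) dist_le_ecc. Qed.

Let S_c0 : S c0.
Proof. by rewrite /upper_comp prednK ?leqnn ?connect0. Qed.

Lemma frontier_not_central a : K a -> r < ecc e a.
Proof.
case/andP=> /eqP lev_a _.
have : a \notin center e by apply/negP => /c0_nearest; rewrite lev_a; lia.
by rewrite inE ltn_neqAle eq_sym rad_le_ecc andbT.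
Qed.

Lemma frontier_near_outside a y : K a -> ~~ S y -> dist e a y <= r.
Proof.
move=> Ka Sy; have [b Kb Hb] := frontier_separates sym conn S_c0 Sy.
by have := frontier_dist_le sym conn ch y Ka Kb; have := dist_le_ecc e c0 y; lia.
Qed.

Lemma frontier_near_inside y : S y -> exists2 a, K a & dist e a y <= r.
Proof.
move=> Sy; have [a Ka Ha] := frontier_below sym conn Sy; exists a => //.
by have := dist_le_ecc e u y; have := ecc_le_diam e u; lia.
Qed.

Lemma frontier_crossing : exists a1 a2 y1 y2,
  [/\ K a1, K a2, dist e a1 y1 <= r < dist e a2 y1 & dist e a2 y2 <= r < dist e a1 y2].
Proof.
pose A y := [set a | K a & dist e a y <= r].
have [y1 Sy1 y1_min] := arg_minnP (fun y => #|A y|) S_c0.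
have [a1 Ka1 Ha1] := frontier_near_inside Sy1.
have [y2 Hy2] : exists y2, r < dist e a1 y2.
  by have [y Hy] := ecc_attained e a1; exists y; rewrite Hy frontier_not_central.
have Sy2 : S y2 by apply: contraTT Hy2 => Sy2; rewrite -leqNgt frontier_near_outside.
have /subsetPn [a2] : ~~ (A y2 \subset A y1).
  apply: contraTN (y1_min y2 Sy2) => sub21; rewrite -ltnNge proper_card //.
  by apply/properP; split=> //; exists a1; rewrite !inE Ka1 ?Ha1 // -ltnNge.
rewrite !inE => /andP [Ka2 Ha2] /nandP [/negP // | ]; rewrite -ltnNge => Ha2y1.
by exists a1, a2, y1, y2; rewrite Ka1 Ka2 Ha1 Ha2 Ha2y1 Hy2.
Qed.

Lemma too_far_contra : False.
Proof.
have [a1 [a2 [y1 [y2 [Ka1 Ka2 /andP [Ha1y1 Ha2y1] /andP [Ha2y2 Ha1y2]]]]]] := frontier_crossing.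
have a12 : a1 != a2 by apply: contraTneq Ha2y1 => <-; rewrite -leqNgt.
have e12 := frontier_clique sym conn ch Ka1 Ka2 a12.
have Hq : dist e a1 y2 = (dist e a2 y2).+1.
  by have := frontier_dist_le sym conn ch y2 Ka1 Ka2; lia.
move: (chordal_almost_geodesic (y1 := y1) (y2 := y2) sym conn ch e12).
rewrite !(distC conn sym y2) => /(_ Hq (leq_ltn_trans Ha1y1 Ha2y1)).
by have := ecc_le_diam e y1; have := dist_le_ecc e y1 y2; lia.
Qed.

End NearestCenter.

Theorem proposition8 (T : finType) (e : rel T) :
  simple_graph e -> connected_graph e -> chordal e ->
  forall u : T, exists2 c : T, c \in center e &
    dist e u c + ecc e c <= diam e.
Proof.
move=> [sym _] conn ch u.
have [c1 ecc_c1] := rad_attained e u.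
have c1_center : c1 \in center e by rewrite inE ecc_c1.
have [c0 c0_center c0_nearest] := arg_minnP (dist e u) c1_center.
exists c0; rewrite // leqNgt; apply/negP => too_far.
exact: (too_far_contra sym conn ch c0_center c0_nearest too_far).
Qed.
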